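(* Let $0<\mu<L_{\max}^{-1}$ with $L_{\max}=\max_i\|A_i\|_2^2$, and let $\{x^n\}$ be generated by GAITA (as in the context) from any $x^0\in\mathbf{R}^N$. Then for all $n\in\mathbf{N}$, $$T_\lambda(x^n)-T_\lambda(x^{n+1})\geq\frac12\Big(\frac1\mu-L_{\max}\Big)\|x^n-x^{n+1}\|_2^2.$$
   Context: Let $A\in\mathbf{R}^{m\times N}$ have columns $A_1,\dots,A_N$, $y\in\mathbf{R}^m$, $\lambda>0$, $q\in(0,1)$, and $T_\lambda(x)=\frac12\|Ax-y\|_2^2+\lambda\sum_{i=1}^N|x_i|^q$. For a step size $\mu>0$ set $\tau_{\mu,q}=\frac{2-q}{2-2q}(2\lambda\mu(1-q))^{\frac{1}{2-q}}$ and $\eta_{\mu,q}=(2\lambda\mu(1-q))^{\frac{1}{2-q}}$. For $z\in\mathbf{R}$ let $prox_{\mu,\lambda|\cdot|^q}(z)=\arg\min_{v\in\mathbf{R}}\{\frac{(z-v)^2}{2\mu}+\lambda|v|^q\}$ (a single point when $|z|\neq\tau_{\mu,q}$). Define $\mathcal{T}(z,w)$ as the unique element of $prox_{\mu,\lambda|\cdot|^q}(z)$ if $|z|\neq\tau_{\mu,q}$, and, if $|z|=\tau_{\mu,q}$, as $sgn(z)\eta_{\mu,q}$ when $w\neq0$ and $0$ when $w=0$ ($sgn(0)=0$). GAITA: given $x^0\in\mathbf{R}^N$, for $n=0,1,2,\dots$ let $i=(n\bmod N)+1$, $z_i^n=x_i^n-\mu A_i^T(Ax^n-y)$, $x_i^{n+1}=\mathcal{T}(z_i^n,x_i^n)$,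 $x_j^{n+1}=x_j^n$ for $j\neq i$. *)

From mathcomp Require Import all_boot all_order all_algebra.
From mathcomp Require Import all_classical all_reals all_analysis.
Set Implicit Arguments. Unset Strict Implicit. Unset Printing Implicit Defensive.
Import Order.TTheory GRing.Theory Num.Theory.
Local Open Scope ring_scope.
Local Open Scope classical_set_scope.

Section GAITA.
Variables (R : realType) (m N : nat).
Implicit Types (A : 'M[R]_(m, N)) (y : 'cV[R]_m) (x : 'cV[R]_N).

Definition sqnorm k (v : 'cV[R]_k) : R := \sum_(i < k) (v i 0) ^+ 2.

Definition colnorm2 A (i : 'I_N) : R := \sum_(k < m) (A k i) ^+ 2.
Definition Lmax A : R := \big[Num.max/0]_(i < N) colnorm2 A i.

Definition Tlam A y (lam q : R) x : R :=
  2^-1 * sqnorm (A *m x - y) + lam * \sum_(i < N) (`|x i 0| `^ q).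

Definition proxset (mu lam q z : R) : set R :=
  [set v | forall w : R,
     (z - v) ^+ 2 / (2 * mu) + lam * (`|v| `^ q)
     <= (z - w) ^+ 2 / (2 * mu) + lam * (`|w| `^ q)].

Definition tau (mu lam q : R) : R :=
  (2 - q) / (2 - 2 * q) * ((2 * lam * mu * (1 - q)) `^ (1 / (2 - q))).
Definition eta (mu lam q : R) : R :=
  (2 * lam * mu * (1 - q)) `^ (1 / (2 - q)).

Definition Tmap (mu lam q z w : R) : R :=
  if `|z| != tau mu lam q then xget 0 (proxset mu lam q z)
  else if w != 0 then Num.sg z * eta mu lam q else 0.

(* one GAITA step at iteration n: coordinate i = n mod N (0-based) *)
Definition gaita_step A y (mu lam q : R) (n : nat) x : 'cV[R]_N :=
  \col_(j < N)
    if (j : nat) == (n %% N)%N then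
      Tmap mu lam q (x j 0 - mu * ((A^T *m (A *m x - y)) j 0)) (x j 0)
    else x j 0.

Fixpoint gaita A y (mu lam q : R) (x0 : 'cV[R]_N) (n : nat) : 'cV[R]_N :=
  match n with
  | O => x0
  | S n' => gaita_step A y mu lam q n' (gaita A y mu lam q x0 n')
  end.

End GAITA.

From mathcomp Require Import all_boot all_order all_algebra.
From mathcomp Require Import all_classical all_reals all_analysis.
From mathcomp Require Import ring lra.
Import Order.TTheory GRing.Theory Num.Theory.
Import numFieldNormedType.Exports.

(* A GAITA step moves one coordinate x_i to a value v that does not increase the
   one-dimensional proximal objective (z - v)^2/(2 mu) + lam |v|^q at
   z = x_i - mu A_i^T (A x - y) compared with v = x_i: for |z| <> tau, v is the
   minimizer; on the tie |z| = tau, sg z * eta is again a minimizer, because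
   t^q >= t (2 - q - (1 - q) t) for t > 0, while the alternative value 0 is only
   chosen when x_i = 0 already.  Expanding 1/2 ||A x - y||^2 exactly along the
   i-th coordinate, with curvature ||A_i||^2 <= L_max, the gradient terms cancel
   against those of the proximal objective and leave the decrease
   (1/mu - L_max) (v - x_i)^2 / 2. *)

Set Implicit Arguments.
Unset Strict Implicit.
Unset Printing Implicit Defensive.
Local Open Scope ring_scope.
Local Open Scope classical_set_scope.

Section Prox.
Variable R : realType.
Implicit Types mu lam q z v w : R.

Definition prox_obj mu lam q z v : R := (z - v) ^+ 2 / (2 * mu) + lam * (`|v| `^ q).

Lemma prox_objN mu lam q z v : prox_obj mu lam q (- z) (- v) = prox_obj mu lam q z v.
Proof. by rewrite /prox_obj normrN -opprD sqrrN. Qed.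

Lemma proxsetN mu lam q z v : proxset mu lam q z v -> proxset mu lam q (- z) (- v).
Proof.
move=> zv w; change (prox_obj mu lam q (- z) (- v) <= prox_obj mu lam q (- z) w).
by rewrite -[w]opprK !prox_objN; apply: zv.
Qed.

Lemma continuous_powR_norm q : 0 < q -> continuous (fun v : R => `|v| `^ q).
Proof.
move=> q0 v; have [->|v0] := eqVneq v 0.
  apply/cvgrPdist_lt => e e0; rewrite normr0 powR0 ?gt_eqF //.
  have d0 : 0 < e `^ q^-1 by rewrite powR_gt0.
  near=> t; rewrite sub0r normrN ger0_norm ?powR_ge0 //.
  have -> : e = (e `^ q^-1) `^ q by rewrite -powRrM mulVf ?gt_eqF // powRr1 ?(ltW e0).
  by apply: gt0_ltr_powR; rewrite ?nnegrE ?normr_ge0 ?powR_ge0.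
have powR_cont : {for `|v|, continuous (fun a : R => a `^ q)}.
  apply: (@differentiable_continuous _ R^o R^o); apply/derivable1_diffP.
  by apply: derivable_powR; rewrite in_itv /= andbT normr_gt0.
exact: (continuous_comp (@norm_continuous _ R^o v) powR_cont).
Unshelve. all: by end_near.
Qed.

Lemma continuous_prox_obj mu lam q z : 0 < q -> continuous (prox_obj mu lam q z).
Proof.
move=> q0 v; apply: cvgD; apply: cvgM; try exact: cvg_cst.
- by rewrite expr2; apply: cvgM; apply: cvgB; exact: cvg_cst || exact: cvg_id.
- exact: continuous_powR_norm.
Qed.

Lemma proxset_nonempty mu lam q z : 0 < mu -> 0 < lam -> 0 < q ->
  exists v, proxset mu lam q z v.
Proof.
move=> mu0 lam0 q0.
have z_ge0 := normr_ge0 z.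
have ab : - (2 * `|z|) <= 2 * `|z| by lra.
have [c _ cmin] := EVT_min ab (continuous_subspaceT (@continuous_prox_obj mu lam q z q0)).
exists c => w; have [|w_out] := boolP (w \in `[- (2 * `|z|), 2 * `|z|]%R); first exact: cmin.
have obj0 : prox_obj mu lam q z 0 = z ^+ 2 / (2 * mu).
  by rewrite /prox_obj subr0 normr0 powR0 ?gt_eqF // mulr0 addr0.
apply: le_trans (cmin 0 _) _; first by rewrite in_itv /=; apply/andP; split; lra.
have far : z ^+ 2 <= (z - w) ^+ 2.
  move: w_out; rewrite in_itv /= negb_and -!ltNge.
  by have := ler_norm z; have := ler_norm (- z); rewrite normrN => ? ? /orP[] ?; nra.
rewrite obj0 /prox_obj -[X in X <= _]addr0.
apply: lerD; first by rewrite ler_pM2r ?invr_gt0 ?mulr_gt0.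
by rewrite mulr_ge0 ?powR_ge0 ?(ltW lam0).
Qed.

Lemma powR_ge_quadratic q t : 0 < q -> q < 1 -> 0 < t ->
  t * (2 - q - (1 - q) * t) <= t `^ q.
Proof.
move=> q0 q1 t0; rewrite -(mulr_powRB1 (ltW t0) q0) ler_pM2l // /powR gt_eqF //.
have ln_le : ln t <= t - 1 by have := @le_ln1Dx R (t - 1); rewrite subrKC; apply; lra.
have := expR_ge1Dx ((q - 1) * ln t).
have : (1 - q) * ln t <= (1 - q) * (t - 1) by rewrite ler_pM2l // subr_gt0.
lra.
Qed.

(* The left side equals T^2, and for u = e t > 0 the excess of the right side,
   times 1 - q, is e^2 (t^q - t (2 - q - (1 - q) t)). *)
Lemma threshold_minimizer q e T P u : 0 < q -> q < 1 -> 0 < e ->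
  P * (1 - q) * e `^ q = e ^+ 2 -> T * (2 - 2 * q) = (2 - q) * e ->
  (T - e) ^+ 2 + P * e `^ q <= (T - u) ^+ 2 + P * `|u| `^ q.
Proof.
move=> q0 q1 e0 He HT; have q1' : 0 < 1 - q by rewrite subr_gt0.
have P0 : 0 < P.
  have : 0 < P * (1 - q) * e `^ q by rewrite He exprn_gt0.
  by rewrite pmulr_lgt0 ?powR_gt0 // pmulr_lgt0.
have T0 : 0 < T.
  have : 0 < T * (2 - 2 * q) by rewrite HT mulr_gt0 //; lra.
  by rewrite pmulr_lgt0 //; lra.
have -> : (T - e) ^+ 2 + P * e `^ q = T ^+ 2.
  apply: (mulfI (lt0r_neq0 q1')).
  have -> : (1 - q) * ((T - e) ^+ 2 + P * e `^ q)
    = (1 - q) * T ^+ 2 + (P * (1 - q) * e `^ q - e ^+ 2) + e * ((2 - q) * e - T * (2 - 2 * q)).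
    by ring.
  by rewrite He HT !subrr mulr0 !addr0.
have [u_le0|u_gt0] := leP u 0.
  have : 0 <= P * `|u| `^ q by rewrite mulr_ge0 ?powR_ge0 ?(ltW P0).
  nra.
rewrite gtr0_norm //; set t := u / e.
have t0 : 0 < t by rewrite divr_gt0.
have -> : u = e * t by rewrite /t mulrCA mulfV ?gt_eqF ?mulr1.
rewrite powRM ?(ltW e0) ?(ltW t0) // -subr_ge0 -(pmulr_rge0 _ q1').
have -> : (1 - q) * ((T - e * t) ^+ 2 + P * (e `^ q * t `^ q) - T ^+ 2)
  = (1 - q) * e ^+ 2 * t ^+ 2 - e * t * (T * (2 - 2 * q)) + P * (1 - q) * e `^ q * t `^ q.
  by ring.
rewrite HT He.
have := powR_ge_quadratic q0 q1 t0; have := exprn_gt0 2 e0; nra.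
Qed.

Section Threshold.
Variables mu lam q : R.
Hypotheses (mu0 : 0 < mu) (lam0 : 0 < lam) (q0 : 0 < q) (q1 : q < 1).

Let eta_base_gt0 : 0 < 2 * lam * mu * (1 - q).
Proof. by rewrite !mulr_gt0 // subr_gt0. Qed.

Let two_sub_2q_gt0 : 0 < 2 - 2 * q.
Proof. by move: q1; lra. Qed.

Lemma eta_gt0 : 0 < eta mu lam q.
Proof. exact: powR_gt0. Qed.

Lemma eta_powR : 2 * mu * lam * (1 - q) * eta mu lam q `^ q = eta mu lam q ^+ 2.
Proof.
have eta_pow : eta mu lam q `^ (2 - q) = 2 * lam * mu * (1 - q).
  by rewrite -powRrM mul1r mulVf ?powRr1 ?(ltW eta_base_gt0) // subr_eq0 gt_eqF // (lt_trans q1) ?ltr1n.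
rewrite mulrC [X in _ * X = _](_ : _ = eta mu lam q `^ (2 - q)); last by rewrite eta_pow; ring.
by rewrite -powRD ?(gt_eqF eta_gt0) ?implybT // addrC subrK powR_mulrn ?(ltW eta_gt0).
Qed.

Lemma tau_eta : tau mu lam q * (2 - 2 * q) = (2 - q) * eta mu lam q.
Proof. by rewrite /tau /eta; field; apply: lt0r_neq0. Qed.

Lemma proxset_tau_eta : proxset mu lam q (tau mu lam q) (eta mu lam q).
Proof.
move=> w; rewrite (gtr0_norm eta_gt0).
have scale a b : a / (2 * mu) + lam * b = (a + 2 * mu * lam * b) / (2 * mu).
  by field; rewrite lt0r_neq0.
rewrite !scale ler_pM2r ?invr_gt0 ?mulr_gt0 //.
exact: threshold_minimizer q0 q1 eta_gt0 eta_powR tau_eta.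
Qed.

Lemma proxset_sg_eta z : `|z| = tau mu lam q -> proxset mu lam q z (Num.sg z * eta mu lam q).
Proof.
have tau_gt0 : 0 < tau mu lam q.
  have : 0 < tau mu lam q * (2 - 2 * q).
    by rewrite tau_eta mulr_gt0 ?eta_gt0 // subr_gt0 (lt_trans q1) ?ltr1n.
  by rewrite pmulr_lgt0.
have [z_lt0|z_gt0|->] := ltgtP z 0; last by rewrite normr0 => tau0; move: tau_gt0; rewrite -tau0 ltxx.
- rewrite ltr0_norm // ltr0_sg // mulN1r => /(canRL opprK) ->.
  exact/proxsetN/proxset_tau_eta.
- by rewrite gtr0_norm // gtr0_sg // mul1r => ->; exact: proxset_tau_eta.
Qed.

Lemma prox_obj_Tmap_le z w : prox_obj mu lam q z (Tmap mu lam q z w) <= prox_obj mu lam q z w.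
Proof.
rewrite /Tmap; case: ifPn => [_|/negPn/eqP z_tau].
  exact: (xgetPex 0 (@proxset_nonempty mu lam q z mu0 lam0 q0) w).
case: ifPn => [_|/negPn/eqP -> //]; exact: proxset_sg_eta.
Qed.

End Threshold.
End Prox.

Section CoordinateUpdate.
Variables (R : realType) (m N : nat) (A : 'M[R]_(m, N)) (y : 'cV[R]_m).
Variables (x : 'cV[R]_N) (i : 'I_N) (d : R).

Lemma sqnorm_scale_delta : sqnorm (d *: delta_mx i 0 : 'cV[R]_N) = d ^+ 2.
Proof.
rewrite /sqnorm (bigD1 i) //= big1 => [|j /negbTE ji]; last by rewrite !mxE ji mulr0 expr0n.
by rewrite !mxE !eqxx mulr1 addr0.
Qed.

Lemma sum_update (f : R -> R) :
  \sum_(j < N) f ((x + d *: delta_mx i 0) j 0)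
  = \sum_(j < N) f (x j 0) - f (x i 0) + f (x i 0 + d).
Proof.
rewrite (bigD1 i) //= [in RHS](bigD1 i) //= !mxE !eqxx mulr1.
rewrite (eq_bigr (fun j => f (x j 0))) => [|j /negbTE ji]; first by ring.
by rewrite !mxE ji mulr0 addr0.
Qed.

Lemma sqnorm_residual_update :
  sqnorm (A *m (x + d *: delta_mx i 0) - y)
  = sqnorm (A *m x - y) + 2 * d * (A^T *m (A *m x - y)) i 0 + d ^+ 2 * colnorm2 A i.
Proof.
rewrite [A *m (_ + _)]mulmxDr -scalemxAr -colE addrAC /sqnorm /colnorm2 mxE mulr_sumr mulr_sumr.
rewrite -!big_split /=; apply: eq_bigr => k _; rewrite !mxE; ring.
Qed.

Lemma Tlam_coordinate_descent (lam q mu : R) : 0 < mu ->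
  let z := x i 0 - mu * (A^T *m (A *m x - y)) i 0 in
  prox_obj mu lam q z (x i 0 + d) <= prox_obj mu lam q z (x i 0) ->
  2^-1 * (mu^-1 - colnorm2 A i) * d ^+ 2
    <= Tlam A y lam q x - Tlam A y lam q (x + d *: delta_mx i 0).
Proof.
move=> mu0 z; set g := (A^T *m (A *m x - y)) i 0.
have -> : prox_obj mu lam q z (x i 0 + d) <= prox_obj mu lam q z (x i 0)
    = (g * d + d ^+ 2 / (2 * mu) + lam * (`|x i 0 + d| `^ q - `|x i 0| `^ q) <= 0).
  by rewrite -subr_le0; congr (_ <= 0); rewrite /prox_obj /z -/g; field; rewrite lt0r_neq0.
move=> descent.
rewrite /Tlam sqnorm_residual_update (sum_update (fun v => `|v| `^ q)) -/g.
have -> : 2^-1 * (mu^-1 - colnorm2 A i) * d ^+ 2 = d ^+ 2 / (2 * mu) - 2^-1 * colnorm2 A i * d ^+ 2.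
  by field; rewrite lt0r_neq0.
lra.
Qed.

End CoordinateUpdate.

Section GaitaDescent.
Variables (R : realType) (m N : nat) (A : 'M[R]_(m, N)) (y : 'cV[R]_m) (lam q mu : R).
Hypotheses (lam0 : 0 < lam) (q0 : 0 < q) (q1 : q < 1) (mu0 : 0 < mu).

Lemma gaita_stepE n x (i : 'I_N) : i = (n %% N)%N :> nat ->
  gaita_step A y mu lam q n x
  = x + (Tmap mu lam q (x i 0 - mu * (A^T *m (A *m x - y)) i 0) (x i 0) - x i 0)
          *: delta_mx i 0.
Proof.
move=> iE; apply/matrixP => j k; rewrite ord1 !mxE -iE.
have [->|ji] := eqVneq j i; first by rewrite eqxx mulr1 subrKC.
by rewrite (negbTE (ji : (j : nat) != i)) /= mulr0 addr0.
Qed.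

Lemma gaita_step_descent n x :
  2^-1 * (mu^-1 - Lmax A) * sqnorm (x - gaita_step A y mu lam q n x)
    <= Tlam A y lam q x - Tlam A y lam q (gaita_step A y mu lam q n x).
Proof.
have [N0|N_gt0] := posnP N.
  have -> : gaita_step A y mu lam q n x = x.
    by apply/matrixP => j; move: (ltn_ord j); rewrite {2}N0.
  by rewrite !subrr /sqnorm big1 ?mulr0 // => j; move: (ltn_ord j); rewrite {2}N0.
pose i := Ordinal (ltn_pmod n N_gt0).
rewrite (@gaita_stepE n x i) //; set d := (_ - x i 0).
rewrite opprD addrA subrr add0r -scaleNr sqnorm_scale_delta sqrrN.
apply: le_trans _ (Tlam_coordinate_descent (lam := lam) (q := q) mu0 _); last first.
  by rewrite /d subrKC prox_obj_Tmap_le.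
rewrite ler_wpM2r ?sqr_ge0 // ler_wpM2l ?invr_ge0 ?ler0n // lerB //.
exact: le_bigmax.
Qed.

End GaitaDescent.

Theorem mainTheorem8 (R : realType) (m N : nat) (A : 'M[R]_(m, N)) (y : 'cV[R]_m)
  (lam q mu : R) (x0 : 'cV[R]_N) :
  0 < lam -> 0 < q -> q < 1 -> 0 < mu -> mu * Lmax A < 1 ->
  forall n : nat,
    Tlam A y lam q (gaita A y mu lam q x0 n) - Tlam A y lam q (gaita A y mu lam q x0 n.+1)
    >= 2^-1 * (mu^-1 - Lmax A) * sqnorm (gaita A y mu lam q x0 n - gaita A y mu lam q x0 n.+1).
Proof.
(* The step-size condition only makes the constant positive; the descent
   inequality holds for every mu > 0. *)
move=> lam0 q0 q1 mu0 _ n.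
exact: gaita_step_descent.
Qed.
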